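(* Let $a,b,c,q$ be complex parameters for which all series below are defined (no denominator parameter a nonpositive integer), and for $|x|<1$ put \[ F^q(x):={}_3F_2\!\left({1,c,q\atop a,b};x\right), \] and write $F_a(x)$ for the same function regarded as depending on the parameter $a$ (so $F_{a-1}$, $F_{a-2}$ have $a$ replaced by $a-1$, $a-2$). Then \[ (a-q-1)(b-q-1)F^q(x)+q\big(a+b-3-2q-(c-q-1)x\big)F^{q+1}(x)+q(1+q)(1-x)F^{q+2}(x)=(a-1)(b-1), \] \[ (a-2)(a-1)(1-x)F_{a-2}(x)+(a-1)\big((2a-c-q-3)x-a+b+1\big)F_{a-1}(x)-(a-q-1)(a-c-1)x\,F_a(x)=(a-1)(b-1). \] In particular, if $a,b,c,q$ are real with $a+b>c+q+2$, then \[ (a-q-1)(b-q-1)F^q(1)+q(a+b-c-2-q)F^{q+1}(1)=(a-1)(b-1), \] \[ (a-1)(a+b-c-q-2)F_{a-1}(1)-(a-q-1)(a-c-1)F_a(1)=(a-1)(b-1). \]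
   Context: ${}_3F_2\!\left({a_1,a_2,a_3\atop b_1,b_2};x\right)=\sum_{n\ge0}\frac{(a_1)_n(a_2)_n(a_3)_n}{(b_1)_n(b_2)_n}\frac{x^n}{n!}$ with $(x)_n=x(x+1)\cdots(x+n-1)$; it converges at $x=1$ when $b_1+b_2-a_1-a_2-a_3>0$. *)

From Stdlib Require Import Reals Factorial.
Open Scope R_scope.

Record Cplx := mkC { Cre : R; Cim : R }.

Definition RtoC (r : R) : Cplx := mkC r 0.
Definition Cnat (n : nat) : Cplx := RtoC (INR n).
Definition Cadd (z w : Cplx) : Cplx := mkC (Cre z + Cre w) (Cim z + Cim w).
Definition Copp (z : Cplx) : Cplx := mkC (- Cre z) (- Cim z).
Definition Csub (z w : Cplx) : Cplx := Cadd z (Copp w).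
Definition Cmul (z w : Cplx) : Cplx :=
  mkC (Cre z * Cre w - Cim z * Cim w) (Cre z * Cim w + Cim z * Cre w).
Definition Cinv (z : Cplx) : Cplx :=
  mkC (Cre z / (Cre z ^ 2 + Cim z ^ 2)) (- Cim z / (Cre z ^ 2 + Cim z ^ 2)).
Definition Cnorm (z : Cplx) : R := sqrt (Cre z ^ 2 + Cim z ^ 2).

Fixpoint Cpow (z : Cplx) (n : nat) : Cplx :=
  match n with O => RtoC 1 | S k => Cmul z (Cpow z k) end.

Declare Scope Cx_scope.
Delimit Scope Cx_scope with Cx.
Infix "+" := Cadd : Cx_scope.
Infix "-" := Csub : Cx_scope.
Infix "*" := Cmul : Cx_scope.
Notation "- z" := (Copp z) : Cx_scope.

Fixpoint poch (x : Cplx) (n : nat) : Cplx :=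
  match n with O => RtoC 1 | S k => Cmul (poch x k) (Cadd x (Cnat k)) end.

Definition nonpos_int (z : Cplx) : Prop := exists n : nat, z = Copp (Cnat n).

Definition F32_term (a1 a2 a3 b1 b2 x : Cplx) (n : nat) : Cplx :=
  Cmul (Cmul (Cmul (Cmul (poch a1 n) (poch a2 n)) (poch a3 n))
             (Cinv (Cmul (poch b1 n) (poch b2 n))))
       (Cmul (Cpow x n) (Cinv (Cnat (fact n)))).

Fixpoint Cpartial (f : nat -> Cplx) (N : nat) : Cplx :=
  match N with O => f O | S k => Cadd (Cpartial f k) (f (S k)) end.

Definition Cseries_cv (f : nat -> Cplx) (L : Cplx) : Prop :=
  Un_cv (fun N => Cre (Cpartial f N)) (Cre L) /\
  Un_cv (fun N => Cim (Cpartial f N)) (Cim L).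

Definition F32_cv (a1 a2 a3 b1 b2 x L : Cplx) : Prop :=
  Cseries_cv (F32_term a1 a2 a3 b1 b2 x) L.

(* Let [T_n] be the [n]-th term of [3F2(1, c, q; a, b; x)] and [R_n = x (c+n) (q+n) T_n], so that
   [(a+n) (b+n) T_(n+1) = R_n].  Raising [q] or lowering [a] by one multiplies [T_n] by a factor
   linear in [n]; hence each contiguous combination of the statement equals, termwise,
   [(a-1+n) (b-1+n) T_n - R_n = R_(n-1) - R_n], and its partial sums telescope to
   [(a-1) (b-1) - R_N].  It remains to see that [R_N -> 0].  For [|x| < 1] all the series converge
   by the ratio test, and [R_N] is a combination of terms of the series with [q+1] and [q+2].
   At [x = 1], with real parameters and [a + b > c + q + 2], the series converge by Raabe's test,
   and a high enough power of [|R_N|] satisfies Raabe's condition, so [R_N -> 0]. *)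

From Pilot Require Import Defs.
From Stdlib Require Import Reals Lra Lia Factorial.
From Coquelicot Require Coquelicot.
Open Scope R_scope.
(* Coquelicot loads ssreflect, which switches bullets off. *)
Set Bullet Behavior "Strict Subproofs".

(* Imported at top level, Coquelicot's [RtoC], [Copp] and [Cinv] would shadow those of Defs
   in the statement. *)
Module Contiguity.
Import Coquelicot.Coquelicot.

(** * Series of nonnegative reals *)

Lemma INR_eventually_ge (K : R) : exists N : nat, forall n, (N <= n)%nat -> K <= INR n.
Proof.
  destruct (INR_archimed 1 K Rlt_0_1) as [N HN].
  exists N. intros n Hn. apply le_INR in Hn. lra.
Qed.

Lemma quadratic_eventually_le (A B C : R) : 0 < A ->
  exists K, forall m, K <= m -> B * m + C <= A * (m * m).
Proof.
  intros HA. exists (1 + (Rabs B + Rabs C) / A). intros m Hm.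
  assert (HBC : Rabs B + Rabs C <= A * (m - 1)).
  { apply Rmult_le_reg_r with (/ A); [now apply Rinv_0_lt_compat|].
    replace (A * (m - 1) * / A) with (m - 1) by (field; lra). unfold Rdiv in Hm. lra. }
  pose proof (Rle_abs B); pose proof (Rle_abs C); pose proof (Rabs_pos B); pose proof (Rabs_pos C).
  assert (Hm1 : 1 <= m) by (pose proof (Rdiv_le_0_compat (Rabs B + Rabs C) A ltac:(lra) HA); lra).
  nra.
Qed.

Lemma sq_ratio_eventually (M X : R) : 0 <= X < 1 ->
  exists N0, forall n, (N0 <= n)%nat ->
    M + 1 <= INR n /\ (INR n + M) * (INR n + M) * X <= (1 + X) / 2 * ((INR n - M) * (INR n - M)).
Proof.
  intros HX. set (r := (1 + X) / 2).
  destruct (quadratic_eventually_le (r - X) (2 * M * (r + X)) (- (M * M) * (r - X)))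
    as [K HK]; [unfold r; lra|].
  destruct (INR_eventually_ge (Rmax K (M + 1))) as [N0 HN0].
  exists N0. intros n Hn. specialize (HN0 n Hn).
  pose proof (Rmax_l K (M + 1)); pose proof (Rmax_r K (M + 1)).
  specialize (HK (INR n) ltac:(lra)). split; [lra|].
  assert (r * ((INR n - M) * (INR n - M)) - (INR n + M) * (INR n + M) * X
          = (r - X) * (INR n * INR n) - (2 * M * (r + X) * INR n + - (M * M) * (r - X)))
    by ring.
  lra.
Qed.

Lemma ex_series_ratio_le (u : nat -> R) (r : R) (N0 : nat) :
  0 <= r < 1 -> (forall n, 0 <= u n) ->
  (forall n, (N0 <= n)%nat -> u (S n) <= r * u n) -> ex_series u.
Proof.
  intros Hr Hpos Hu.
  assert (Hgeo : forall k, u (N0 + k)%nat <= u N0 * r ^ k).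
  { induction k as [|k IH]; [rewrite Nat.add_0_r; simpl; lra|].
    rewrite Nat.add_succ_r. eapply Rle_trans; [apply Hu; lia|]. simpl. nra. }
  apply (ex_series_incr_n _ N0).
  apply (@ex_series_le R_AbsRing R_CompleteNormedModule) with (fun k => u N0 * r ^ k).
  - intro k. change (norm (u (N0 + k)%nat)) with (Rabs (u (N0 + k)%nat)).
    rewrite Rabs_pos_eq; auto.
  - apply (ex_series_scal_l (u N0) (fun k => r ^ k)), ex_series_geom. rewrite Rabs_pos_eq; lra.
Qed.

(* Raabe's test: [d * (u_(N0+1) + ... + u_(N0+k+1))] is bounded by [N0 * u_N0], because
   [n * u_n] decreases by at least [d * u_(n+1)] at each step. *)
Lemma ex_series_raabe (u : nat -> R) (d : R) (N0 : nat) :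
  0 < d -> (forall n, 0 <= u n) ->
  (forall n, (N0 <= n)%nat -> (INR n + 1 + d) * u (S n) <= INR n * u n) -> ex_series u.
Proof.
  intros Hd Hpos Hu. set (v := fun k => u (S N0 + k)%nat).
  assert (Htel : forall k, d * sum_f_R0 v k + INR (S N0 + k) * u (S N0 + k)%nat <= INR N0 * u N0).
  { induction k as [|k IH]; simpl sum_f_R0; unfold v.
    - rewrite Nat.add_0_r, S_INR. specialize (Hu N0 (le_n _)). lra.
    - replace (S N0 + S k)%nat with (S (S N0 + k)) by lia.
      specialize (Hu (S N0 + k)%nat ltac:(lia)). rewrite S_INR. fold v. lra. }
  assert (Hbound : forall k, sum_f_R0 v k <= INR N0 * u N0 / d).
  { intro k. specialize (Htel k). pose proof (pos_INR (S N0 + k)). pose proof (Hpos (S N0 + k)%nat).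
    apply Rmult_le_reg_l with d; [lra|].
    replace (d * (INR N0 * u N0 / d)) with (INR N0 * u N0) by (field; lra). nra. }
  destruct (growing_cv (sum_f_R0 v)) as [l Hl].
  - intro n. simpl. pose proof (Hpos (S N0 + S n)%nat). unfold v. lra.
  - exists (INR N0 * u N0 / d). intros y [i ->]. apply Hbound.
  - apply (ex_series_incr_n u (S N0)). exists l. apply is_series_Reals. exact Hl.
Qed.

Lemma pow_add_ge_lin (m e : R) (k : nat) : 0 < m -> 0 <= e ->
  m ^ k * (m + INR k * e) <= m * (m + e) ^ k.
Proof.
  intros Hm He.
  pose proof (Rle_pow_lin (e / m) k (Rdiv_le_0_compat _ _ He Hm)) as Hlin.
  replace (m + e) with (m * (1 + e / m)) by (field; lra).
  rewrite Rpow_mult_distr.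
  replace (m ^ k * (m + INR k * e)) with (m * m ^ k * (1 + INR k * (e / m))) by (field; lra).
  rewrite <- Rmult_assoc. apply Rmult_le_compat_l; [|exact Hlin].
  pose proof (pow_lt m k Hm). nra.
Qed.

Lemma is_lim_seq_pow_0 (u : nat -> R) (k : nat) : (forall n, 0 <= u n) ->
  is_lim_seq (fun n => u n ^ k) 0 -> is_lim_seq u 0.
Proof.
  intros Hpos Hk. rewrite is_lim_seq_Reals in Hk |- *.
  intros eps Heps. destruct (Hk (eps ^ k) (pow_lt _ _ Heps)) as [N HN].
  exists N. intros n Hn. specialize (HN n Hn). unfold R_dist in *.
  rewrite Rminus_0_r, Rabs_pos_eq in * by first [apply pow_le, Hpos | apply Hpos].
  destruct (Rlt_or_le (u n) eps) as [Hlt|Hge]; [exact Hlt|].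
  exfalso. assert (eps ^ k <= u n ^ k) by (apply pow_incr; lra). lra.
Qed.

(* Raising to a power [k] with [k e >= 2] turns the ratio condition into Raabe's condition
   with [d = 1], via Bernoulli's inequality. *)
Lemma raabe_lim_0 (g : nat -> R) (e : R) (N0 : nat) :
  0 < e -> (forall n, 0 <= g n) ->
  (forall n, (N0 <= n)%nat -> (INR n + e) * g (S n) <= INR n * g n) -> is_lim_seq g 0.
Proof.
  intros He Hpos Hg.
  destruct (INR_eventually_ge (2 / e)) as [k Hk]. specialize (Hk k (le_n k)).
  assert (Hke : 2 <= INR k * e).
  { apply Rmult_le_compat_r with (r := e) in Hk; [|lra].
    unfold Rdiv in Hk. rewrite Rmult_assoc, Rinv_l in Hk; lra. }
  apply (is_lim_seq_pow_0 g k Hpos), ex_series_lim_0.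
  apply (ex_series_raabe _ 1 (Nat.max N0 1)); [lra| intro; apply pow_le, Hpos|].
  intros n Hn. set (m := INR n).
  assert (Hm : 1 <= m) by (apply (le_INR 1); lia).
  pose proof (Hpos n); pose proof (Hpos (S n)).
  assert (Hpow : (m + e) ^ k * g (S n) ^ k <= m ^ k * g n ^ k).
  { rewrite <- !Rpow_mult_distr. apply pow_incr. split; [nra|apply Hg; lia]. }
  pose proof (pow_add_ge_lin m e k ltac:(lra) ltac:(lra)) as Hbern.
  pose proof (pow_le (g (S n)) k ltac:(lra)); pose proof (pow_le (g n) k ltac:(lra)).
  pose proof (pow_lt m k ltac:(lra)).
  assert (0 <= m ^ k * g (S n) ^ k) by nra.
  apply Rmult_le_reg_l with (m ^ k); [lra|].
  apply Rle_trans with (m ^ k * (m + INR k * e) * g (S n) ^ k); [nra|].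
  apply Rle_trans with (m * (m + e) ^ k * g (S n) ^ k).
  - apply Rmult_le_compat_r; lra.
  - replace (m ^ k * (m * g n ^ k)) with (m * (m ^ k * g n ^ k)) by ring.
    rewrite Rmult_assoc. apply Rmult_le_compat_l; lra.
Qed.

Lemma raabe_ratio_eventually (g : nat -> R) (al be ga de e : R) :
  (forall n, 0 <= g n) ->
  (forall n, g (S n) * (Rabs (al + INR n) * Rabs (be + INR n))
             = g n * (Rabs (ga + INR n) * Rabs (de + INR n))) ->
  e < al + be - ga - de ->
  exists N0, forall n, (N0 <= n)%nat -> (INR n + e) * g (S n) <= INR n * g n.
Proof.
  intros Hpos Hrec Hs.
  (* [m (al + m) (be + m) - (m + e) (ga + m) (de + m)] is quadratic in [m]: the cubes cancel. *)
  destruct (quadratic_eventually_le (al + be - ga - de - e)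
              (- (al * be - e * (ga + de) - ga * de)) (e * ga * de) ltac:(lra)) as [K HK].
  destruct (INR_eventually_ge (Rmax K (Rabs al + Rabs be + Rabs ga + Rabs de + 1))) as [N0 HN0].
  exists N0. intros n Hn. specialize (HN0 n Hn). specialize (Hrec n). set (m := INR n) in *.
  pose proof (Rmax_l K (Rabs al + Rabs be + Rabs ga + Rabs de + 1)).
  pose proof (Rmax_r K (Rabs al + Rabs be + Rabs ga + Rabs de + 1)).
  pose proof (Rle_abs (- al)); pose proof (Rle_abs (- be)); pose proof (Rle_abs (- ga));
  pose proof (Rle_abs (- de)); rewrite !Rabs_Ropp in *.
  pose proof (Rabs_pos al); pose proof (Rabs_pos be);
  pose proof (Rabs_pos ga); pose proof (Rabs_pos de).
  rewrite !Rabs_pos_eq in Hrec by lra.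
  assert (Hcubic : (m + e) * ((ga + m) * (de + m)) <= m * ((al + m) * (be + m))).
  { specialize (HK m ltac:(lra)). nra. }
  pose proof (Hpos n); pose proof (Hpos (S n)).
  apply Rmult_le_reg_r with ((al + m) * (be + m)); [nra|].
  rewrite Rmult_assoc, Hrec. nra.
Qed.

(** * The terms of [3F2(1, c, q; a, b; x)] *)

Local Open Scope C_scope.

Definition shifts_nonzero (a : C) : Prop := forall n : nat, a + INR n <> 0.

Fixpoint pochC (z : C) (n : nat) : C :=
  match n with O => 1 | S k => pochC z k * (z + INR k) end.

(* The [n]-th term of [3F2(1, c, q; a, b; x)]: the factor [(1)_n] cancels [n!]. *)
Definition hterm (c q a b x : C) (n : nat) : C :=
  pochC c n * pochC q n * Cpow x n * / (pochC a n * pochC b n).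

Definition hremainder (c q a b x : C) (n : nat) : C :=
  x * (c + INR n) * (q + INR n) * hterm c q a b x n.

Fixpoint psum (f : nat -> C) (N : nat) : C :=
  match N with O => f O | S k => psum f k + f (S k) end.

Definition Ccv (s : nat -> C) (l : C) : Prop :=
  is_lim_seq (fun n => fst (s n)) (fst l) /\ is_lim_seq (fun n => snd (s n)) (snd l).

Lemma RtoC_INR_S (n : nat) : RtoC (INR (S n)) = INR n + 1.
Proof. now rewrite S_INR, RtoC_plus. Qed.

Lemma pochC_neq_0 (a : C) (n : nat) : shifts_nonzero a -> pochC a n <> 0.
Proof.
  intro Ha; induction n as [|n IH]; simpl pochC.
  - intro E. apply (f_equal fst) in E. simpl in E. lra.
  - now apply Cmult_neq_0.
Qed.

Lemma pochC_shift (q : C) (n : nat) : pochC (q + 1) n * q = pochC q n * (q + INR n).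
Proof.
  induction n as [|n IH]; simpl pochC.
  - simpl INR. ring.
  - rewrite RtoC_INR_S.
    transitivity (pochC (q + 1) n * q * (q + 1 + INR n)); [ring|]. rewrite IH. ring.
Qed.

Lemma hterm_0 (c q a b x : C) : hterm c q a b x 0 = 1.
Proof. unfold hterm; simpl. field. Qed.

Lemma hterm_succ (c q a b x : C) (n : nat) : shifts_nonzero a -> shifts_nonzero b ->
  hterm c q a b x (S n) * ((a + INR n) * (b + INR n))
  = hterm c q a b x n * ((c + INR n) * (q + INR n)) * x.
Proof.
  intros Ha Hb. unfold hterm; simpl pochC; simpl Cpow.
  field. repeat split; auto using pochC_neq_0.
Qed.

Lemma hterm_numer_shift (c q q' a b x : C) (n : nat) : q' = q + 1 ->
  q * hterm c q' a b x n = (q + INR n) * hterm c q a b x n.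
Proof.
  intros ->. unfold hterm.
  transitivity (pochC c n * Cpow x n * / (pochC a n * pochC b n) * (pochC (q + 1) n * q)); [ring|].
  rewrite pochC_shift. ring.
Qed.

Lemma hterm_denom_shift (c q a a' b x : C) (n : nat) : a = a' + 1 ->
  shifts_nonzero a' -> shifts_nonzero b ->
  a' * hterm c q a' b x n = (a' + INR n) * hterm c q a b x n.
Proof.
  intros -> Ha' Hb.
  assert (Ha'0 : a' <> 0).
  { specialize (Ha' 0%nat). simpl INR in Ha'. now rewrite Cplus_0_r in Ha'. }
  assert (Hpoch : pochC (a' + 1) n = pochC a' n * (a' + INR n) / a')
    by (rewrite <- pochC_shift; field; exact Ha'0).
  unfold hterm. rewrite Hpoch. field. repeat split; auto using pochC_neq_0.
Qed.

(** * Complex sequences and series *)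

Lemma Ccv_ext (s t : nat -> C) (l : C) : (forall n, s n = t n) -> Ccv s l -> Ccv t l.
Proof.
  intros E [H1 H2]; split; eapply is_lim_seq_ext; eauto; intro n; simpl; now rewrite E.
Qed.

Lemma Ccv_plus (s t : nat -> C) (l m : C) : Ccv s l -> Ccv t m -> Ccv (fun n => s n + t n) (l + m).
Proof. intros [H1 H2] [H3 H4]; split; simpl; now apply is_lim_seq_plus'. Qed.

Lemma Ccv_scal (k : C) (s : nat -> C) (l : C) : Ccv s l -> Ccv (fun n => k * s n) (k * l).
Proof.
  intros [H1 H2]; split; simpl.
  - apply is_lim_seq_minus'; apply is_lim_seq_mult'; auto using is_lim_seq_const.
  - apply is_lim_seq_plus'; apply is_lim_seq_mult'; auto using is_lim_seq_const.
Qed.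

Lemma Ccv_unique (s : nat -> C) (l m : C) : Ccv s l -> Ccv s m -> l = m.
Proof.
  intros [H1 H2] [H3 H4].
  apply is_lim_seq_unique in H1, H2, H3, H4.
  apply injective_projections; congruence.
Qed.

Lemma Ccv_minus (s t : nat -> C) (l m : C) :
  Ccv s l -> Ccv t m -> Ccv (fun n => s n - t n) (l - m).
Proof. intros [H1 H2] [H3 H4]; split; simpl; now apply is_lim_seq_minus'. Qed.

Lemma Ccv_lim_eq (P R : nat -> C) (L K : C) :
  (forall N, P N = K - R N) -> Ccv R 0 -> Ccv P L -> L = K.
Proof.
  intros E HR HP.
  assert (HK : Ccv (fun N => K - R N) (K - 0))
    by (apply Ccv_minus; [split; apply is_lim_seq_const | exact HR]).
  replace (K - 0) with K in HK by ring.
  apply (Ccv_unique P); [exact HP|]. eapply Ccv_ext; [|exact HK]. intro N. now rewrite E.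
Qed.

Lemma fst_psum (f : nat -> C) (N : nat) : fst (psum f N) = sum_f_R0 (fun n => fst (f n)) N.
Proof. induction N as [|N IH]; simpl; [reflexivity|]. now rewrite IH. Qed.

Lemma snd_psum (f : nat -> C) (N : nat) : snd (psum f N) = sum_f_R0 (fun n => snd (f n)) N.
Proof. induction N as [|N IH]; simpl; [reflexivity|]. now rewrite IH. Qed.

Lemma Ccv_psum_terms_0 (f : nat -> C) (l : C) : Ccv (psum f) l -> Ccv f 0.
Proof.
  intros [H1 H2]. split; simpl; apply ex_series_lim_0.
  - exists (fst l). apply is_series_Reals, is_lim_seq_Reals.
    eapply is_lim_seq_ext; [|exact H1]. intro N. apply fst_psum.
  - exists (snd l). apply is_series_Reals, is_lim_seq_Reals.
    eapply is_lim_seq_ext; [|exact H2]. intro N. apply snd_psum.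
Qed.

Lemma Rabs_fst_le_Cmod (z : C) : Rabs (fst z) <= Cmod z.
Proof. eapply Rle_trans; [apply Rmax_l|apply Rmax_Cmod]. Qed.

Lemma Rabs_snd_le_Cmod (z : C) : Rabs (snd z) <= Cmod z.
Proof. eapply Rle_trans; [apply Rmax_r|apply Rmax_Cmod]. Qed.

Lemma Ccv_0_of_Cmod (s : nat -> C) : is_lim_seq (fun n => Cmod (s n)) 0 -> Ccv s 0.
Proof.
  intro Hmod.
  assert (Hcomp : forall g : C -> R, (forall z, Rabs (g z) <= Cmod z) ->
                  is_lim_seq (fun n => g (s n)) 0).
  { intros g Hg. apply is_lim_seq_abs_0.
    apply (is_lim_seq_le_le (fun _ => 0%R) _ (fun n => Cmod (s n)));
      [|apply is_lim_seq_const|exact Hmod].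
    intro n. split; [apply Rabs_pos|apply Hg]. }
  split; apply Hcomp; [apply Rabs_fst_le_Cmod|apply Rabs_snd_le_Cmod].
Qed.

Lemma Ccv_psum_of_ex_series_Cmod (f : nat -> C) :
  ex_series (fun n => Cmod (f n)) -> exists l, Ccv (psum f) l.
Proof.
  intro Hmod.
  assert (Hcomp : forall g : C -> R, (forall z, Rabs (g z) <= Cmod z) ->
                  ex_series (fun n => g (f n))).
  { intros g Hg. apply ex_series_Rabs.
    apply (@ex_series_le R_AbsRing R_CompleteNormedModule) with (fun n => Cmod (f n));
      [|exact Hmod].
    intro n. change (norm (Rabs (g (f n)))) with (Rabs (Rabs (g (f n)))).
    rewrite Rabs_Rabsolu. apply Hg. }
  destruct (Hcomp fst Rabs_fst_le_Cmod) as [l1 H1].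
  destruct (Hcomp snd Rabs_snd_le_Cmod) as [l2 H2].
  exists (l1, l2). apply is_series_Reals, is_lim_seq_Reals in H1, H2.
  split; simpl; (eapply is_lim_seq_ext; [|eassumption]); intro N; cbv beta;
    [rewrite fst_psum | rewrite snd_psum]; reflexivity.
Qed.

(** * Convergence of the series and of the remainder *)

Lemma Cmod_add_INR_ge (z : C) (n : nat) : INR n - Cmod z <= Cmod (z + INR n).
Proof.
  pose proof (Cmod_triangle (z + INR n) (- z)) as T.
  replace (z + INR n + - z) with (RtoC (INR n)) in T by ring.
  rewrite Cmod_opp, Cmod_R, Rabs_pos_eq in T by apply pos_INR. lra.
Qed.

Lemma Cmod_add_INR_le (z : C) (n : nat) : Cmod (z + INR n) <= Cmod z + INR n.
Proof.
  pose proof (Cmod_triangle z (INR n)) as T.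
  rewrite Cmod_R, Rabs_pos_eq in T by apply pos_INR. lra.
Qed.

Lemma hterm_ratio_eventually (c q a b x : C) :
  shifts_nonzero a -> shifts_nonzero b -> Cmod x < 1 ->
  exists N0, forall n, (N0 <= n)%nat ->
    Cmod (hterm c q a b x (S n)) <= (1 + Cmod x) / 2 * Cmod (hterm c q a b x n).
Proof.
  intros Ha Hb Hx. set (M := (Cmod a + Cmod b + Cmod c + Cmod q)%R).
  destruct (sq_ratio_eventually M (Cmod x)) as [N0 HN0]; [split; [apply Cmod_ge_0|exact Hx]|].
  exists N0. intros n Hn. destruct (HN0 n Hn) as [HM Hsq].
  pose proof (hterm_succ c q a b x n Ha Hb) as E.
  apply (f_equal Cmod) in E. rewrite !Cmod_mult in E.
  pose proof (Cmod_add_INR_ge a n); pose proof (Cmod_add_INR_ge b n);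
  pose proof (Cmod_add_INR_le c n); pose proof (Cmod_add_INR_le q n).
  pose proof (Cmod_ge_0 a); pose proof (Cmod_ge_0 b); pose proof (Cmod_ge_0 c);
  pose proof (Cmod_ge_0 q); pose proof (Cmod_ge_0 x).
  pose proof (Cmod_ge_0 (hterm c q a b x n)); pose proof (Cmod_ge_0 (hterm c q a b x (S n))).
  pose proof (Cmod_ge_0 (c + INR n)); pose proof (Cmod_ge_0 (q + INR n)).
  set (m := INR n) in *.
  set (T0 := Cmod (hterm c q a b x n)) in *. set (T1 := Cmod (hterm c q a b x (S n))) in *.
  assert (Hden : (m - M) * (m - M) <= Cmod (a + m) * Cmod (b + m)) by (unfold M in *; nra).
  assert (Hnum : Cmod (c + m) * Cmod (q + m) <= (m + M) * (m + M)) by (unfold M in *; nra).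
  apply Rmult_le_reg_r with ((m - M) * (m - M))%R; [nra|].
  apply Rle_trans with (T1 * (Cmod (a + m) * Cmod (b + m)))%R; [nra|].
  rewrite E. apply Rle_trans with (T0 * ((m + M) * (m + M)) * Cmod x)%R; [|nra].
  apply Rmult_le_compat_r; [lra|]. now apply Rmult_le_compat_l.
Qed.

Lemma hseries_cv_disk (c q a b x : C) :
  shifts_nonzero a -> shifts_nonzero b -> Cmod x < 1 ->
  exists l, Ccv (psum (hterm c q a b x)) l.
Proof.
  intros Ha Hb Hx. apply Ccv_psum_of_ex_series_Cmod.
  destruct (hterm_ratio_eventually c q a b x Ha Hb Hx) as [N0 HN0].
  apply (ex_series_ratio_le _ ((1 + Cmod x) / 2) N0); [|intro; apply Cmod_ge_0|exact HN0].
  pose proof (Cmod_ge_0 x). lra.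
Qed.

Lemma Cmod_hterm_succ_one (a b c q : R) (n : nat) : shifts_nonzero a -> shifts_nonzero b ->
  (Cmod (hterm c q a b 1 (S n)) * (Rabs (a + INR n) * Rabs (b + INR n))
   = Cmod (hterm c q a b 1 n) * (Rabs (c + INR n) * Rabs (q + INR n)))%R.
Proof.
  intros Ha Hb. pose proof (hterm_succ c q a b 1 n Ha Hb) as E.
  apply (f_equal Cmod) in E.
  now rewrite !Cmod_mult, Cmod_1, Rmult_1_r, <- !RtoC_plus, !Cmod_R in E.
Qed.

Lemma hseries_cv_one (a b c q : R) :
  shifts_nonzero a -> shifts_nonzero b -> (c + q + 1 < a + b)%R ->
  exists l, Ccv (psum (hterm c q a b 1)) l.
Proof.
  intros Ha Hb Hs. apply Ccv_psum_of_ex_series_Cmod.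
  set (e := ((1 + (a + b - c - q)) / 2)%R).
  destruct (raabe_ratio_eventually (fun n => Cmod (hterm c q a b 1 n)) a b c q e)
    as [N0 HN0];
    [intro; apply Cmod_ge_0 | intro n; now apply Cmod_hterm_succ_one | unfold e; lra |].
  apply (ex_series_raabe _ (e - 1) N0); [unfold e; lra | intro; apply Cmod_ge_0 |].
  intros n Hn. replace (INR n + 1 + (e - 1))%R with (INR n + e)%R by ring. now apply HN0.
Qed.

(* Shifting [q] twice rewrites the remainder through terms of two convergent series. *)
Lemma hremainder_lim_0 (c q a b x l1 l2 : C) :
  Ccv (psum (hterm c (q + 1) a b x)) l1 -> Ccv (psum (hterm c (q + 2) a b x)) l2 ->
  Ccv (hremainder c q a b x) 0.
Proof.
  intros H1 H2.
  assert (Hrem : forall n, x * (q * (c - q - 1) * hterm c (q + 1) a b x n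
                               + q * (q + 1) * hterm c (q + 2) a b x n)
                           = hremainder c q a b x n).
  { intro n. unfold hremainder.
    transitivity (x * ((c - q - 1) * (q * hterm c (q + 1) a b x n)
                       + q * ((q + 1) * hterm c (q + 2) a b x n))); [ring|].
    rewrite (hterm_numer_shift c (q + 1) (q + 2)) by ring.
    transitivity (x * ((c + INR n) * (q * hterm c (q + 1) a b x n))); [ring|].
    rewrite (hterm_numer_shift c q (q + 1)) by ring. ring. }
  eapply Ccv_ext; [exact Hrem|].
  replace (RtoC 0) with (x * (q * (c - q - 1) * 0 + q * (q + 1) * 0)) by ring.
  apply Ccv_scal, Ccv_plus; apply Ccv_scal; eapply Ccv_psum_terms_0; eassumption.
Qed.

Lemma hremainder_lim_0_one (a b c q : R) :
  shifts_nonzero a -> shifts_nonzero b -> (c + q + 2 < a + b)%R ->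
  Ccv (hremainder c q a b 1) 0.
Proof.
  intros Ha Hb Hs.
  set (g := fun n => (Rabs (a - 1 + INR n) * Rabs (b - 1 + INR n) * Cmod (hterm c q a b 1 n))%R).
  assert (Hshift : forall (z : R) n, (z - 1 + INR (S n) = z + INR n)%R)
    by (intros; rewrite S_INR; ring).
  assert (Hrem : forall n, Cmod (hremainder c q a b 1 n) = g (S n)).
  { intro n. unfold hremainder, g. rewrite !Hshift, !Cmod_mult, Cmod_1, <- !RtoC_plus, !Cmod_R.
    rewrite (Rmult_comm (Rabs (a + INR n) * Rabs (b + INR n))), Cmod_hterm_succ_one by assumption.
    ring. }
  assert (Hrec : forall n, (g (S n) * (Rabs (a - 1 + INR n) * Rabs (b - 1 + INR n))
                            = g n * (Rabs (c + INR n) * Rabs (q + INR n)))%R).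
  { intro n. unfold g. rewrite !Hshift.
    transitivity (Rabs (a - 1 + INR n) * Rabs (b - 1 + INR n)
                  * (Cmod (hterm c q a b 1 (S n)) * (Rabs (a + INR n) * Rabs (b + INR n))))%R;
      [ring|].
    rewrite Cmod_hterm_succ_one by assumption. ring. }
  set (e := ((a + b - c - q - 2) / 2)%R).
  destruct (raabe_ratio_eventually g (a - 1) (b - 1) c q e) as [N0 HN0];
    [intro; unfold g; repeat apply Rmult_le_pos; auto using Rabs_pos, Cmod_ge_0 | exact Hrec
    | unfold e; lra |].
  apply Ccv_0_of_Cmod. apply (is_lim_seq_ext (fun n => g (S n))); [intro n; now rewrite Hrem|].
  apply (is_lim_seq_incr_1 g), (raabe_lim_0 g e N0); [unfold e; lra | | exact HN0].
  intro; unfold g; repeat apply Rmult_le_pos; auto using Rabs_pos, Cmod_ge_0.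
Qed.

(** * Contiguous relations *)

Lemma psum_ext (f g : nat -> C) (N : nat) : (forall n, f n = g n) -> psum f N = psum g N.
Proof. intro E; induction N as [|N IH]; cbn [psum]; now rewrite ?IH, E. Qed.

Lemma psum_plus (f g : nat -> C) (N : nat) :
  psum (fun n => f n + g n) N = psum f N + psum g N.
Proof. induction N as [|N IH]; cbn [psum]; [reflexivity|]. rewrite IH. ring. Qed.

Lemma psum_minus (f g : nat -> C) (N : nat) :
  psum (fun n => f n - g n) N = psum f N - psum g N.
Proof. induction N as [|N IH]; cbn [psum]; [reflexivity|]. rewrite IH. ring. Qed.

Lemma psum_scal (k : C) (f : nat -> C) (N : nat) : psum (fun n => k * f n) N = k * psum f N.
Proof. induction N as [|N IH]; cbn [psum]; [reflexivity|]. rewrite IH. ring. Qed.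

Lemma psum_telescope (U R : nat -> C) (N : nat) :
  (forall n, U (S n) = R n) -> psum (fun n => U n - R n) N = U 0%nat - R N.
Proof. intro HU; induction N as [|N IH]; cbn [psum]; [reflexivity|]. rewrite IH, HU. ring. Qed.

Lemma hterm_scaled_succ (c q a b x : C) (n : nat) : shifts_nonzero a -> shifts_nonzero b ->
  (a - 1 + INR (S n)) * (b - 1 + INR (S n)) * hterm c q a b x (S n) = hremainder c q a b x n.
Proof.
  intros Ha Hb. rewrite RtoC_INR_S. unfold hremainder.
  transitivity (hterm c q a b x (S n) * ((a + INR n) * (b + INR n))); [ring|].
  rewrite hterm_succ by assumption. ring.
Qed.

Lemma hterm_contiguous_q (c q a b x : C) (n : nat) :
  (a - q - 1) * (b - q - 1) * hterm c q a b x n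
  + q * (a + b - 3 - 2 * q - (c - q - 1) * x) * hterm c (q + 1) a b x n
  + q * (1 + q) * (1 - x) * hterm c (q + 2) a b x n
  = (a - 1 + INR n) * (b - 1 + INR n) * hterm c q a b x n - hremainder c q a b x n.
Proof.
  pose proof (hterm_numer_shift c q (q + 1) a b x n eq_refl) as H1.
  assert (H2 : q * (1 + q) * hterm c (q + 2) a b x n
               = (q + INR n) * (q + 1 + INR n) * hterm c q a b x n).
  { transitivity (q * ((q + 1) * hterm c (q + 2) a b x n)); [ring|].
    rewrite (hterm_numer_shift c (q + 1) (q + 2)) by ring.
    transitivity ((q + 1 + INR n) * (q * hterm c (q + 1) a b x n)); [ring|].
    rewrite H1. ring. }
  transitivity ((a - q - 1) * (b - q - 1) * hterm c q a b x n
    + (a + b - 3 - 2 * q - (c - q - 1) * x) * (q * hterm c (q + 1) a b x n)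
    + (1 - x) * (q * (1 + q) * hterm c (q + 2) a b x n)); [ring|].
  rewrite H1, H2. unfold hremainder. ring.
Qed.

Lemma hterm_contiguous_a (c q a b x : C) (n : nat) :
  shifts_nonzero (a - 2) -> shifts_nonzero (a - 1) -> shifts_nonzero b ->
  (a - 2) * (a - 1) * (1 - x) * hterm c q (a - 2) b x n
  + (a - 1) * ((2 * a - c - q - 3) * x - a + b + 1) * hterm c q (a - 1) b x n
  - (a - q - 1) * (a - c - 1) * x * hterm c q a b x n
  = (a - 1 + INR n) * (b - 1 + INR n) * hterm c q a b x n - hremainder c q a b x n.
Proof.
  intros Ha2 Ha1 Hb.
  assert (H1 := hterm_denom_shift c q a (a - 1) b x n ltac:(ring) Ha1 Hb).
  assert (H2 : (a - 2) * (a - 1) * hterm c q (a - 2) b x n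
               = (a - 2 + INR n) * (a - 1 + INR n) * hterm c q a b x n).
  { transitivity ((a - 1) * ((a - 2) * hterm c q (a - 2) b x n)); [ring|].
    rewrite (hterm_denom_shift c q (a - 1) (a - 2)) by (auto; ring).
    transitivity ((a - 2 + INR n) * ((a - 1) * hterm c q (a - 1) b x n)); [ring|].
    rewrite H1. ring. }
  transitivity ((1 - x) * ((a - 2) * (a - 1) * hterm c q (a - 2) b x n)
    + ((2 * a - c - q - 3) * x - a + b + 1) * ((a - 1) * hterm c q (a - 1) b x n)
    - (a - q - 1) * (a - c - 1) * x * hterm c q a b x n); [ring|].
  rewrite H1, H2. unfold hremainder. ring.
Qed.

Lemma psum_hterm_telescope (f : nat -> C) (c q a b x : C) (N : nat) :
  shifts_nonzero a -> shifts_nonzero b ->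
  (forall n, f n = (a - 1 + INR n) * (b - 1 + INR n) * hterm c q a b x n
                   - hremainder c q a b x n) ->
  psum f N = (a - 1) * (b - 1) - hremainder c q a b x N.
Proof.
  intros Ha Hb Hf. rewrite (psum_ext _ _ N Hf).
  rewrite psum_telescope by (intro n; now apply hterm_scaled_succ).
  rewrite hterm_0. simpl INR. ring.
Qed.

Lemma contiguous_q_psum (c q a b x : C) (N : nat) : shifts_nonzero a -> shifts_nonzero b ->
  (a - q - 1) * (b - q - 1) * psum (hterm c q a b x) N
  + q * (a + b - 3 - 2 * q - (c - q - 1) * x) * psum (hterm c (q + 1) a b x) N
  + q * (1 + q) * (1 - x) * psum (hterm c (q + 2) a b x) N
  = (a - 1) * (b - 1) - hremainder c q a b x N.
Proof.
  intros Ha Hb. rewrite <- !psum_scal, <- !psum_plus.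
  apply psum_hterm_telescope; [exact Ha | exact Hb | intro n; apply hterm_contiguous_q].
Qed.

Lemma contiguous_a_psum (c q a b x : C) (N : nat) :
  shifts_nonzero (a - 2) -> shifts_nonzero (a - 1) -> shifts_nonzero a -> shifts_nonzero b ->
  (a - 2) * (a - 1) * (1 - x) * psum (hterm c q (a - 2) b x) N
  + (a - 1) * ((2 * a - c - q - 3) * x - a + b + 1) * psum (hterm c q (a - 1) b x) N
  - (a - q - 1) * (a - c - 1) * x * psum (hterm c q a b x) N
  = (a - 1) * (b - 1) - hremainder c q a b x N.
Proof.
  intros Ha2 Ha1 Ha Hb. rewrite <- !psum_scal, <- psum_plus, <- psum_minus.
  apply psum_hterm_telescope; [exact Ha | exact Hb | intro n; now apply hterm_contiguous_a].
Qed.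

Lemma contiguous_q_lim (c q a b x l0 l1 l2 : C) : shifts_nonzero a -> shifts_nonzero b ->
  Ccv (psum (hterm c q a b x)) l0 -> Ccv (psum (hterm c (q + 1) a b x)) l1 ->
  Ccv (psum (hterm c (q + 2) a b x)) l2 ->
  (a - q - 1) * (b - q - 1) * l0 + q * (a + b - 3 - 2 * q - (c - q - 1) * x) * l1
  + q * (1 + q) * (1 - x) * l2 = (a - 1) * (b - 1).
Proof.
  intros Ha Hb H0 H1 H2.
  eapply Ccv_lim_eq; [intro N; exact (contiguous_q_psum c q a b x N Ha Hb)
                    | eapply hremainder_lim_0; eassumption |].
  apply Ccv_plus; [apply Ccv_plus|]; now apply Ccv_scal.
Qed.

Lemma contiguous_a_lim (c q a b x l0 l1 l2 : C) :
  shifts_nonzero (a - 2) -> shifts_nonzero (a - 1) -> shifts_nonzero a -> shifts_nonzero b ->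
  Cmod x < 1 ->
  Ccv (psum (hterm c q (a - 2) b x)) l2 -> Ccv (psum (hterm c q (a - 1) b x)) l1 ->
  Ccv (psum (hterm c q a b x)) l0 ->
  (a - 2) * (a - 1) * (1 - x) * l2 + (a - 1) * ((2 * a - c - q - 3) * x - a + b + 1) * l1
  - (a - q - 1) * (a - c - 1) * x * l0 = (a - 1) * (b - 1).
Proof.
  intros Ha2 Ha1 Ha Hb Hx H2 H1 H0.
  destruct (hseries_cv_disk c (q + 1) a b x Ha Hb Hx) as [m1 Hm1].
  destruct (hseries_cv_disk c (q + 2) a b x Ha Hb Hx) as [m2 Hm2].
  eapply Ccv_lim_eq; [intro N; exact (contiguous_a_psum c q a b x N Ha2 Ha1 Ha Hb)
                    | eapply hremainder_lim_0; eassumption |].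
  apply Ccv_minus; [apply Ccv_plus|]; now apply Ccv_scal.
Qed.

Lemma contiguous_q_lim_one (a b c q : R) (l0 l1 : C) :
  shifts_nonzero a -> shifts_nonzero b -> (c + q + 2 < a + b)%R ->
  Ccv (psum (hterm c q a b 1)) l0 -> Ccv (psum (hterm c (q + 1)%R a b 1)) l1 ->
  RtoC ((a - q - 1) * (b - q - 1)) * l0 + RtoC (q * (a + b - c - 2 - q)) * l1
  = RtoC ((a - 1) * (b - 1)).
Proof.
  intros Ha Hb Hs H0 H1. rewrite RtoC_plus in H1.
  apply (Ccv_lim_eq (fun N => RtoC ((a - q - 1) * (b - q - 1)) * psum (hterm c q a b 1) N
                              + RtoC (q * (a + b - c - 2 - q)) * psum (hterm c (q + 1) a b 1) N)
                    (hremainder c q a b 1)).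
  - intro N. rewrite !RtoC_mult, !RtoC_minus, !RtoC_plus.
    rewrite <- (contiguous_q_psum c q a b 1 N Ha Hb). ring.
  - now apply hremainder_lim_0_one.
  - apply Ccv_plus; now apply Ccv_scal.
Qed.

Lemma contiguous_a_lim_one (a b c q : R) (l0 l1 : C) :
  shifts_nonzero (a - 2)%R -> shifts_nonzero (a - 1)%R -> shifts_nonzero a -> shifts_nonzero b ->
  (c + q + 2 < a + b)%R ->
  Ccv (psum (hterm c q (a - 1)%R b 1)) l1 -> Ccv (psum (hterm c q a b 1)) l0 ->
  RtoC ((a - 1) * (a + b - c - q - 2)) * l1 - RtoC ((a - q - 1) * (a - c - 1)) * l0
  = RtoC ((a - 1) * (b - 1)).
Proof.
  intros Ha2 Ha1 Ha Hb Hs H1 H0. rewrite RtoC_minus in Ha2, Ha1, H1.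
  apply (Ccv_lim_eq (fun N => RtoC ((a - 1) * (a + b - c - q - 2)) * psum (hterm c q (a - 1) b 1) N
                              - RtoC ((a - q - 1) * (a - c - 1)) * psum (hterm c q a b 1) N)
                    (hremainder c q a b 1)).
  - intro N. rewrite !RtoC_mult, !RtoC_minus, !RtoC_plus.
    rewrite <- (contiguous_a_psum c q a b 1 N Ha2 Ha1 Ha Hb). ring.
  - now apply hremainder_lim_0_one.
  - apply Ccv_minus; now apply Ccv_scal.
Qed.

(** * Back to the complex numbers of Defs *)

Definition toC (z : Cplx) : C := (Cre z, Cim z).
Definition ofC (z : C) : Cplx := mkC (fst z) (snd z).

Lemma toC_inj (z w : Cplx) : toC z = toC w -> z = w.
Proof. destruct z, w; unfold toC; simpl. intro E. now inversion E. Qed.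

Lemma toC_ofC (z : C) : toC (ofC z) = z.
Proof. now destruct z. Qed.

Lemma toC_add (z w : Cplx) : toC (z + w)%Cx = toC z + toC w.
Proof. reflexivity. Qed.

Lemma toC_sub (z w : Cplx) : toC (z - w)%Cx = toC z - toC w.
Proof. reflexivity. Qed.

Lemma toC_mul (z w : Cplx) : toC (z * w)%Cx = toC z * toC w.
Proof. reflexivity. Qed.

Lemma toC_Cinv (z : Cplx) : toC (Defs.Cinv z) = / toC z.
Proof. reflexivity. Qed.

Lemma toC_RtoC (r : R) : toC (Defs.RtoC r) = r.
Proof. reflexivity. Qed.

Lemma toC_Cnat_1 : toC (Cnat 1) = 1.
Proof. reflexivity. Qed.

Lemma toC_Cnat_2 : toC (Cnat 2) = 2.
Proof. apply injective_projections; simpl; ring. Qed.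

Lemma toC_Cnat_3 : toC (Cnat 3) = 3.
Proof. apply injective_projections; simpl; ring. Qed.

#[export] Hint Rewrite toC_ofC toC_add toC_sub toC_mul toC_RtoC toC_Cnat_1 toC_Cnat_2 toC_Cnat_3
  : toC.

Lemma toC_poch (z : Cplx) (n : nat) : toC (poch z n) = pochC (toC z) n.
Proof. induction n as [|n IH]; simpl; [reflexivity|]. now rewrite toC_mul, IH. Qed.

Lemma toC_Cpow (z : Cplx) (n : nat) : toC (Defs.Cpow z n) = Cpow (toC z) n.
Proof. induction n as [|n IH]; simpl; [reflexivity|]. now rewrite toC_mul, IH. Qed.

Lemma pochC_1 (n : nat) : pochC 1 n = INR (fact n).
Proof.
  induction n as [|n IH]; simpl pochC; [reflexivity|].
  rewrite IH, fact_simpl, mult_INR, S_INR, !RtoC_mult, !RtoC_plus. ring.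
Qed.

Lemma toC_F32_term (c q a b x : Cplx) (n : nat) :
  toC (F32_term (Cnat 1) c q a b x n) = hterm (toC c) (toC q) (toC a) (toC b) (toC x) n.
Proof.
  unfold F32_term, hterm.
  rewrite !toC_mul, !toC_Cinv, !toC_mul, !toC_poch, toC_Cpow, toC_Cnat_1, pochC_1.
  change (toC (Cnat (fact n))) with (RtoC (INR (fact n))).
  set (D := / (pochC (toC a) n * pochC (toC b) n)).
  field. intro E. apply (INR_fact_neq_0 n). now apply (f_equal fst) in E.
Qed.

Lemma toC_Cpartial (f : nat -> Cplx) (N : nat) :
  toC (Cpartial f N) = psum (fun n => toC (f n)) N.
Proof. induction N as [|N IH]; simpl; [reflexivity|]. now rewrite toC_add, IH. Qed.

Lemma F32_cv_iff (c q a b x L : Cplx) :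
  F32_cv (Cnat 1) c q a b x L
  <-> Ccv (psum (hterm (toC c) (toC q) (toC a) (toC b) (toC x))) (toC L).
Proof.
  assert (E : forall N, toC (Cpartial (F32_term (Cnat 1) c q a b x) N)
                        = psum (hterm (toC c) (toC q) (toC a) (toC b) (toC x)) N).
  { intro N. rewrite toC_Cpartial. apply psum_ext, toC_F32_term. }
  unfold F32_cv, Cseries_cv, Ccv. rewrite <- !is_lim_seq_Reals.
  split; intros [H1 H2]; split; (eapply is_lim_seq_ext; [|eassumption]); intro N; simpl;
    now rewrite <- E || rewrite E.
Qed.

Lemma shifts_nonzero_toC (z : Cplx) : ~ nonpos_int z -> shifts_nonzero (toC z).
Proof.
  intros Hz n E. apply Hz. exists n. destruct z as [zr zi].
  unfold toC in E; simpl in E. inversion E.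
  unfold Defs.Copp, Cnat, Defs.RtoC; simpl. f_equal; lra.
Qed.

Lemma F32_cv_disk (c q a b x : Cplx) :
  ~ nonpos_int a -> ~ nonpos_int b -> Cnorm x < 1 -> exists L, F32_cv (Cnat 1) c q a b x L.
Proof.
  intros Ha Hb Hx.
  destruct (hseries_cv_disk (toC c) (toC q) (toC a) (toC b) (toC x)
              (shifts_nonzero_toC a Ha) (shifts_nonzero_toC b Hb) Hx) as [l Hl].
  exists (ofC l). now rewrite F32_cv_iff, toC_ofC.
Qed.

Lemma F32_cv_one (a b c q : R) :
  ~ nonpos_int (Defs.RtoC a) -> ~ nonpos_int (Defs.RtoC b) -> (c + q + 1 < a + b)%R ->
  exists L, F32_cv (Cnat 1) (Defs.RtoC c) (Defs.RtoC q) (Defs.RtoC a) (Defs.RtoC b) (Cnat 1) L.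
Proof.
  intros Ha Hb Hs.
  destruct (hseries_cv_one a b c q (shifts_nonzero_toC _ Ha) (shifts_nonzero_toC _ Hb) Hs)
    as [l Hl].
  exists (ofC l). now rewrite F32_cv_iff, toC_ofC.
Qed.
End Contiguity.
Import Contiguity.

Theorem lemma7p2 :
  (forall a b c q : Cplx,
     ~ nonpos_int (a - Cnat 2)%Cx -> ~ nonpos_int (a - Cnat 1)%Cx ->
     ~ nonpos_int a -> ~ nonpos_int b ->
     forall x : Cplx, Cnorm x < 1 ->
     exists Fq Fq1 Fq2 Fam2 Fam1 Fa : Cplx,
       F32_cv (Cnat 1) c q a b x Fq /\
       F32_cv (Cnat 1) c (q + Cnat 1)%Cx a b x Fq1 /\
       F32_cv (Cnat 1) c (q + Cnat 2)%Cx a b x Fq2 /\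
       F32_cv (Cnat 1) c q (a - Cnat 2)%Cx b x Fam2 /\
       F32_cv (Cnat 1) c q (a - Cnat 1)%Cx b x Fam1 /\
       F32_cv (Cnat 1) c q a b x Fa /\
       ((a - q - Cnat 1) * (b - q - Cnat 1) * Fq
        + q * (a + b - Cnat 3 - Cnat 2 * q - (c - q - Cnat 1) * x) * Fq1
        + q * (Cnat 1 + q) * (Cnat 1 - x) * Fq2
        = (a - Cnat 1) * (b - Cnat 1))%Cx /\
       ((a - Cnat 2) * (a - Cnat 1) * (Cnat 1 - x) * Fam2
        + (a - Cnat 1) * ((Cnat 2 * a - c - q - Cnat 3) * x - a + b + Cnat 1) * Fam1
        - (a - q - Cnat 1) * (a - c - Cnat 1) * x * Fa
        = (a - Cnat 1) * (b - Cnat 1))%Cx)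
  /\
  (forall a b c q : R,
     ~ nonpos_int (RtoC (a - 2)) -> ~ nonpos_int (RtoC (a - 1)) ->
     ~ nonpos_int (RtoC a) -> ~ nonpos_int (RtoC b) ->
     a + b > c + q + 2 ->
     exists Fq Fq1 Fam1 Fa : Cplx,
       F32_cv (Cnat 1) (RtoC c) (RtoC q) (RtoC a) (RtoC b) (Cnat 1) Fq /\
       F32_cv (Cnat 1) (RtoC c) (RtoC (q + 1)) (RtoC a) (RtoC b) (Cnat 1) Fq1 /\
       F32_cv (Cnat 1) (RtoC c) (RtoC q) (RtoC (a - 1)) (RtoC b) (Cnat 1) Fam1 /\
       F32_cv (Cnat 1) (RtoC c) (RtoC q) (RtoC a) (RtoC b) (Cnat 1) Fa /\
       (RtoC ((a - q - 1) * (b - q - 1)) * Fq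
        + RtoC (q * (a + b - c - 2 - q)) * Fq1
        = RtoC ((a - 1) * (b - 1)))%Cx /\
       (RtoC ((a - 1) * (a + b - c - q - 2)) * Fam1
        - RtoC ((a - q - 1) * (a - c - 1)) * Fa
        = RtoC ((a - 1) * (b - 1)))%Cx).
Proof.
  split.
  - intros a b c q Ha2 Ha1 Ha Hb x Hx.
    destruct (F32_cv_disk c q a b x Ha Hb Hx) as [Fq H0].
    destruct (F32_cv_disk c (q + Cnat 1)%Cx a b x Ha Hb Hx) as [Fq1 H1].
    destruct (F32_cv_disk c (q + Cnat 2)%Cx a b x Ha Hb Hx) as [Fq2 H2].
    destruct (F32_cv_disk c q (a - Cnat 2)%Cx b x Ha2 Hb Hx) as [Fam2 H3].
    destruct (F32_cv_disk c q (a - Cnat 1)%Cx b x Ha1 Hb Hx) as [Fam1 H4].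
    exists Fq, Fq1, Fq2, Fam2, Fam1, Fq. do 6 (split; [assumption|]). split.
    all: apply toC_inj; rewrite F32_cv_iff in *.
    all: apply shifts_nonzero_toC in Ha2, Ha1, Ha, Hb; autorewrite with toC in *.
    + now apply contiguous_q_lim.
    + now apply contiguous_a_lim.
  - intros a b c q Ha2 Ha1 Ha Hb Hs.
    destruct (F32_cv_one a b c q Ha Hb ltac:(lra)) as [Fq H0].
    destruct (F32_cv_one a b c (q + 1) Ha Hb ltac:(lra)) as [Fq1 H1].
    destruct (F32_cv_one (a - 1) b c q Ha1 Hb ltac:(lra)) as [Fam1 H2].
    exists Fq, Fq1, Fam1, Fq. do 4 (split; [assumption|]). split.
    all: apply toC_inj; rewrite F32_cv_iff in *.
    all: apply shifts_nonzero_toC in Ha2, Ha1, Ha, Hb; autorewrite with toC in *.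
    + now apply contiguous_q_lim_one.
    + now apply contiguous_a_lim_one.
Qed.
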